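(* Let $M(C,\bar\xi,\pi)$ be a Myller configuration with Darboux frame $(\bar\xi,\bar\mu,\bar v)$ and invariants $G,K,T$, with $(T(s),K(s))\neq(0,0)$ for all $s$. Define $$\sigma_v=\frac{K^{2}\left(\frac{T}{K}\right)'+(T^{2}+K^{2})G}{(T^{2}+K^{2})^{3/2}},$$ where $K^2\left(\frac{T}{K}\right)'$ stands for $T'K-TK'$. Then $C$ is a $\bar v$-helix in $M$ if and only if $\sigma_v$ is constant; in that case the constant angle $\omega$ between $\bar v$ and the axis satisfies $\cot\omega=\mp\sigma_v$ (for an appropriate sign).
   Context: Let $C$ be a smooth curve in $E^3$ parametrized by arclength $s$; primes denote $d/ds$. A Myller configuration $M(C,\bar\xi,\pi)$ consists of a smooth unit vector field $\bar\xi$ along $C$ and a smooth oriented plane field $\pi$ with $\bar\xi\in\pi$; $\bar v$ is the unit normal of $\pi$, $\bar\mu=\bar v\times\bar\xi$, and the Darboux frame satisfies $\bar\xi'=G\bar\mu+K\bar v$, $\bar\mu'=-G\bar\xi+T\bar v$, $\bar v'=-K\bar\xi-T\bar\mu$. $C$ is a $\bar v$-helix in $M$ if there are a constant unit vector $\bar d_v$ and a constant $\omega$ with $\langle\bar v,\bar d_v\rangle=\cos\omega$ along $C$. *)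

From Stdlib Require Import Reals.
From Coquelicot Require Import Coquelicot.
Open Scope R_scope.

Definition vec3 := (R * R * R)%type.
Definition vx (u : vec3) : R := fst (fst u).
Definition vy (u : vec3) : R := snd (fst u).
Definition vz (u : vec3) : R := snd u.
Definition mkv (x y z : R) : vec3 := (x, y, z).

Definition dot (u w : vec3) : R := vx u * vx w + vy u * vy w + vz u * vz w.
Definition cross (u w : vec3) : vec3 :=
  mkv (vy u * vz w - vz u * vy w)
      (vz u * vx w - vx u * vz w)
      (vx u * vy w - vy u * vx w).
Definition vadd (u w : vec3) : vec3 := mkv (vx u + vx w) (vy u + vy w) (vz u + vz w).
Definition vscal (a : R) (u : vec3) : vec3 := mkv (a * vx u) (a * vy u) (a * vz u).

Definition inI (a b : Rbar) (s : R) : Prop := Rbar_lt a s /\ Rbar_lt s b.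

Definition smooth_on (a b : Rbar) (f : R -> R) : Prop :=
  forall (n : nat) (s : R), inI a b s -> ex_derive_n f n s.

Definition vsmooth_on (a b : Rbar) (X : R -> vec3) : Prop :=
  smooth_on a b (fun s => vx (X s)) /\ smooth_on a b (fun s => vy (X s)) /\
  smooth_on a b (fun s => vz (X s)).

Definition vis_derive (X : R -> vec3) (s : R) (d : vec3) : Prop :=
  is_derive (fun t => vx (X t)) s (vx d) /\
  is_derive (fun t => vy (X t)) s (vy d) /\
  is_derive (fun t => vz (X t)) s (vz d).

(* A Myller configuration M(C, xi, pi) over the parameter interval (a,b):
   C = r (arclength parametrized), xi a unit vector field, the plane field pi
   encoded by its unit normal v (with xi in pi, i.e. xi . v = 0),
   mu = v x xi, and the Darboux frame equations with invariants G, K, T. *)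
Definition Myller_configuration (a b : Rbar) (r xi v : R -> vec3)
    (G K T : R -> R) : Prop :=
  vsmooth_on a b r /\ vsmooth_on a b xi /\ vsmooth_on a b v /\
  smooth_on a b G /\ smooth_on a b K /\ smooth_on a b T /\
  forall s, inI a b s ->
    (exists r', vis_derive r s r' /\ dot r' r' = 1) /\
    dot (xi s) (xi s) = 1 /\ dot (v s) (v s) = 1 /\ dot (xi s) (v s) = 0 /\
    vis_derive xi s (vadd (vscal (G s) (cross (v s) (xi s))) (vscal (K s) (v s))) /\
    vis_derive (fun t => cross (v t) (xi t)) s
      (vadd (vscal (- G s) (xi s)) (vscal (T s) (v s))) /\
    vis_derive v s
      (vadd (vscal (- K s) (xi s)) (vscal (- T s) (cross (v s) (xi s)))).

Definition v_helix_with (a b : Rbar) (v : R -> vec3) (d : vec3) (omega : R) : Prop :=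
  dot d d = 1 /\ forall s, inI a b s -> dot (v s) d = cos omega.

Definition v_helix (a b : Rbar) (v : R -> vec3) : Prop :=
  exists d omega, v_helix_with a b v d omega.

Definition sigma_v (G K T : R -> R) (s : R) : R :=
  (Derive T s * K s - T s * Derive K s + (T s ^ 2 + K s ^ 2) * G s)
  / (sqrt (T s ^ 2 + K s ^ 2)) ^ 3.

(* With N = sqrt (T^2 + K^2) we have v' = -(K xi + T mu) = N t, where
   t = -(K xi + T mu) / N; together with u = (T xi - K mu) / N = v x t this is
   the Sabban frame (v, t, u) of the spherical indicatrix of v, and one computes
   t' = N (sigma_v u - v) and u' = - N sigma_v t: sigma_v is the geodesic
   curvature of the indicatrix.  If <v, d> = cos omega is constant, then
   <t, d> = 0, so <u, d> is a constant e with e^2 = sin^2 omega and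
   cos omega = e sigma_v.  Conversely, if sigma_v = c then u + c v is constant
   and its direction is an axis.  Vectors are only differentiable componentwise
   here, so all these identities are used through the coordinates <_, w>
   against constant vectors w. *)

From Stdlib Require Import Reals Lra.
From Coquelicot Require Import Coquelicot.
Open Scope R_scope.

Lemma inI_locally a b s : inI a b s -> locally s (inI a b).
Proof.
  intros [Ha Hb].
  exact (filter_and _ _ (open_Rbar_gt' s a Ha) (open_Rbar_lt' s b Hb)).
Qed.

Lemma inI_between a b s1 s2 t :
  inI a b s1 -> inI a b s2 -> s1 <= t <= s2 -> inI a b t.
Proof.
  intros [Ha1 _] [_ Hb2] [H1 H2]. split.
  - exact (Rbar_lt_le_trans a s1 t Ha1 H1).
  - exact (Rbar_le_lt_trans t s2 b H2 Hb2).
Qed.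

Lemma inI_inhabited a b : Rbar_lt a b -> exists s, inI a b s.
Proof.
  unfold inI.
  destruct a as [a| |], b as [b| |]; simpl; try tauto; intros Hab.
  - exists ((a + b) / 2); simpl; lra.
  - exists (a + 1); simpl; lra.
  - exists (b - 1); simpl; lra.
  - exists 0; simpl; tauto.
Qed.

Lemma is_derive_const_on a b (f : R -> R) c s :
  (forall t, inI a b t -> f t = c) -> inI a b s -> is_derive f s 0.
Proof.
  intros Hf Hs.
  apply (is_derive_ext_loc (fun _ => c)).
  - apply (filter_imp (inI a b)); [|exact (inI_locally a b s Hs)].
    intros t Ht. symmetry. exact (Hf t Ht).
  - exact (is_derive_const c s).
Qed.

Lemma const_on_of_is_derive_0 a b (f : R -> R) :
  (forall s, inI a b s -> is_derive f s 0) ->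
  forall s1 s2, inI a b s1 -> inI a b s2 -> f s1 = f s2.
Proof.
  intros Hf.
  assert (Hle : forall s1 s2, s1 <= s2 -> inI a b s1 -> inI a b s2 -> f s1 = f s2).
  { intros s1 s2 H12 Hs1 Hs2.
    assert (Hin : forall t, Rmin s1 s2 <= t <= Rmax s1 s2 -> inI a b t).
    { rewrite Rmin_left, Rmax_right by lra.
      intros t Ht. exact (inI_between a b s1 s2 t Hs1 Hs2 Ht). }
    destruct (MVT_gen f s1 s2 (fun _ => 0)) as [c [_ Hc]].
    - intros t Ht. apply Hf, Hin. lra.
    - intros t Ht. apply continuity_pt_filterlim, (ex_derive_continuous (V := R_NormedModule)).
      exists 0. apply Hf, Hin. exact Ht.
    - lra. }
  intros s1 s2 Hs1 Hs2. destruct (Rle_dec s1 s2).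
  - exact (Hle s1 s2 r Hs1 Hs2).
  - symmetry. apply Hle; auto; lra.
Qed.

Lemma dot_comm u w : dot u w = dot w u.
Proof. unfold dot; ring. Qed.

Definition vcomb3 (a1 a2 a3 : R) (e1 e2 e3 : vec3) : vec3 :=
  vadd (vadd (vscal a1 e1) (vscal a2 e2)) (vscal a3 e3).

Lemma dot_vcomb3_l a1 a2 a3 e1 e2 e3 w :
  dot (vcomb3 a1 a2 a3 e1 e2 e3) w = a1 * dot e1 w + a2 * dot e2 w + a3 * dot e3 w.
Proof. unfold dot, vcomb3, vadd, vscal, mkv, vx, vy, vz; simpl; ring. Qed.

Lemma dot_vadd_vscal_l a1 a2 e1 e2 w :
  dot (vadd (vscal a1 e1) (vscal a2 e2)) w = a1 * dot e1 w + a2 * dot e2 w.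
Proof. unfold dot, vadd, vscal, mkv, vx, vy, vz; simpl; ring. Qed.

Lemma vec3_ext_dot u u' : (forall w, dot u w = dot u' w) -> u = u'.
Proof.
  destruct u as [[u1 u2] u3], u' as [[u1' u2'] u3']. intros H.
  pose proof (H (mkv 1 0 0)) as H1; pose proof (H (mkv 0 1 0)) as H2;
    pose proof (H (mkv 0 0 1)) as H3.
  unfold dot, mkv, vx, vy, vz in H1, H2, H3; simpl in H1, H2, H3.
  f_equal; [f_equal|]; lra.
Qed.

Definition orthonormal3 (e1 e2 e3 : vec3) : Prop :=
  dot e1 e1 = 1 /\ dot e2 e2 = 1 /\ dot e3 e3 = 1 /\
  dot e1 e2 = 0 /\ dot e1 e3 = 0 /\ dot e2 e3 = 0.

Lemma orthonormal3_cross xi v :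
  dot xi xi = 1 -> dot v v = 1 -> dot xi v = 0 -> orthonormal3 xi (cross v xi) v.
Proof.
  intros Hxi Hv Hxiv.
  assert (Hmu : dot (cross v xi) (cross v xi) = dot v v * dot xi xi - dot xi v ^ 2)
    by (unfold dot, cross, mkv, vx, vy, vz; simpl; ring).
  rewrite Hxi, Hv, Hxiv in Hmu.
  repeat split; auto; [lra| |]; unfold dot, cross, mkv, vx, vy, vz; simpl; ring.
Qed.

Lemma dot_vcomb3_orthonormal3 a1 a2 a3 e1 e2 e3 :
  orthonormal3 e1 e2 e3 ->
  dot (vcomb3 a1 a2 a3 e1 e2 e3) (vcomb3 a1 a2 a3 e1 e2 e3) = a1 ^ 2 + a2 ^ 2 + a3 ^ 2 /\
  dot e3 (vcomb3 a1 a2 a3 e1 e2 e3) = a3.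
Proof.
  intros (H11 & H22 & H33 & H12 & H13 & H23).
  rewrite !dot_vcomb3_l, !(dot_comm _ (vcomb3 _ _ _ _ _ _)), !dot_vcomb3_l.
  rewrite (dot_comm e2 e1), (dot_comm e3 e1), (dot_comm e3 e2), H11, H22, H33, H12, H13, H23.
  split; ring.
Qed.

Lemma dot_parseval_cross xi v d :
  dot xi xi = 1 -> dot v v = 1 -> dot xi v = 0 ->
  dot xi d ^ 2 + dot (cross v xi) d ^ 2 + dot v d ^ 2 = dot d d.
Proof.
  intros Hxi Hv Hxiv.
  assert (Hlagrange : dot (cross v xi) d ^ 2 = dot d d * dot v v * dot xi xi
     + 2 * dot d v * dot v xi * dot xi d - dot d d * dot v xi ^ 2
     - dot v v * dot xi d ^ 2 - dot xi xi * dot d v ^ 2)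
    by (unfold dot, cross, mkv, vx, vy, vz; simpl; ring).
  rewrite Hlagrange, (dot_comm v xi), (dot_comm d v), Hxi, Hv, Hxiv. ring.
Qed.

Lemma vis_derive_dot (X : R -> vec3) s X' w :
  vis_derive X s X' -> is_derive (fun t => dot (X t) w) s (dot X' w).
Proof.
  intros (Hx & Hy & Hz).
  apply (is_derive_ext (fun t => vx w * vx (X t) + vy w * vy (X t) + vz w * vz (X t))).
  { intros t. unfold dot.
    rewrite (Rmult_comm (vx w)), (Rmult_comm (vy w)), (Rmult_comm (vz w)). reflexivity. }
  replace (dot X' w) with (vx w * vx X' + vy w * vy X' + vz w * vz X') by (unfold dot; ring).
  apply (is_derive_plus (fun t => vx w * vx (X t) + vy w * vy (X t))).
  - apply (is_derive_plus (fun t => vx w * vx (X t))); apply is_derive_scal; assumption.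
  - apply is_derive_scal; assumption.
Qed.

Definition sabban_speed (K T : R -> R) (t : R) : R := sqrt (T t ^ 2 + K t ^ 2).

Definition sabban_tangent_coord (K T x y : R -> R) (t : R) : R :=
  - (K t * x t + T t * y t) / sabban_speed K T t.

Definition sabban_normal_coord (K T x y : R -> R) (t : R) : R :=
  (T t * x t - K t * y t) / sabban_speed K T t.

Lemma sabban_speed_pos (K T : R -> R) t : 0 < T t ^ 2 + K t ^ 2 -> 0 < sabban_speed K T t.
Proof. exact (sqrt_lt_R0 _). Qed.

Lemma sabban_speed_sq (K T : R -> R) t :
  0 < T t ^ 2 + K t ^ 2 -> sabban_speed K T t ^ 2 = T t ^ 2 + K t ^ 2.
Proof. intros Hpos. apply pow2_sqrt. lra. Qed.

Lemma sabban_speed_mul_tangent_coord (K T x y : R -> R) t :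
  0 < T t ^ 2 + K t ^ 2 ->
  sabban_speed K T t * sabban_tangent_coord K T x y t = - (K t * x t + T t * y t).
Proof.
  intros Hpos. pose proof (sabban_speed_pos K T t Hpos) as HN.
  unfold sabban_tangent_coord. field. lra.
Qed.

Lemma sabban_coords_sq (K T x y : R -> R) t :
  0 < T t ^ 2 + K t ^ 2 ->
  sabban_tangent_coord K T x y t ^ 2 + sabban_normal_coord K T x y t ^ 2 = x t ^ 2 + y t ^ 2.
Proof.
  intros Hpos. pose proof (sabban_speed_pos K T t Hpos) as HN.
  pose proof (sabban_speed_sq K T t Hpos) as HN2.
  unfold sabban_tangent_coord, sabban_normal_coord.
  field_simplify; [|lra]. rewrite HN2. field. lra.
Qed.

Section SabbanEquations.

Variables (G K T x y z : R -> R) (s : R).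
Hypotheses (HT : ex_derive T s) (HK : ex_derive K s) (Hpos : 0 < T s ^ 2 + K s ^ 2).
Hypothesis Hx : is_derive x s (G s * y s + K s * z s).
Hypothesis Hy : is_derive y s (- G s * x s + T s * z s).

Lemma is_derive_sabban_coords :
  is_derive (sabban_tangent_coord K T x y) s
    (sabban_speed K T s * (sigma_v G K T s * sabban_normal_coord K T x y s - z s)) /\
  is_derive (sabban_normal_coord K T x y) s
    (- sabban_speed K T s * sigma_v G K T s * sabban_tangent_coord K T x y s).
Proof.
  pose proof (is_derive_unique _ _ _ Hx) as Dx; pose proof (is_derive_unique _ _ _ Hy) as Dy.
  pose proof (sabban_speed_pos K T s Hpos) as HN; pose proof (sabban_speed_sq K T s Hpos) as HN2.
  unfold sabban_tangent_coord, sabban_normal_coord, sigma_v, sabban_speed in *.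
  split; auto_derive; replace (T s * (T s * 1) + K s * (K s * 1)) with (T s ^ 2 + K s ^ 2) by ring;
    try (repeat split; try (eexists; eassumption); auto with real; fail).
  all: change (fun t => K t) with K; change (fun t => T t) with T;
    change (fun t => x t) with x; change (fun t => y t) with y;
    rewrite Dx, Dy;
    set (N := sqrt (T s ^ 2 + K s ^ 2)) in *;
    (* once denominators are cleared, the identity only holds modulo N^2 = T^2 + K^2 *)
    assert (HN3 : N ^ 3 = N * (T s ^ 2 + K s ^ 2)) by (rewrite <- HN2; ring);
    assert (HN4 : N ^ 4 = (T s ^ 2 + K s ^ 2) ^ 2) by (rewrite <- HN2; ring);
    field_simplify_eq; [|lra];
    rewrite ?HN4, ?HN3, ?HN2; ring.
Qed.

End SabbanEquations.

Definition frame_coord (X : R -> vec3) (w : vec3) (t : R) : R := dot (X t) w.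

Definition darboux_mu (xi v : R -> vec3) (t : R) : vec3 := cross (v t) (xi t).

Section DarbouxFrame.

Variables (a b : Rbar) (r xi v : R -> vec3) (G K T : R -> R).
Hypothesis HM : Myller_configuration a b r xi v G K T.
Hypothesis HTK : forall s, inI a b s -> (T s, K s) <> (0, 0).

Let mu := darboux_mu xi v.
Let N := sabban_speed K T.
Let sigma := sigma_v G K T.
Let tc w := sabban_tangent_coord K T (frame_coord xi w) (frame_coord mu w).
Let nc w := sabban_normal_coord K T (frame_coord xi w) (frame_coord mu w).

Lemma TK_sq_pos s : inI a b s -> 0 < T s ^ 2 + K s ^ 2.
Proof.
  intros Hs. pose proof (HTK s Hs) as Hnz.
  destruct (Req_dec (T s) 0) as [HT0 | HT0].
  - assert (HK0 : K s <> 0) by (intros HK0; apply Hnz; rewrite HT0, HK0; reflexivity).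
    pose proof (pow2_gt_0 _ HK0). nra.
  - pose proof (pow2_gt_0 _ HT0). nra.
Qed.

Lemma darboux_frame_orthonormal s : inI a b s -> orthonormal3 (xi s) (mu s) (v s).
Proof.
  intros Hs. destruct HM as (_ & _ & _ & _ & _ & _ & Hloc).
  destruct (Hloc s Hs) as (_ & Hxi & Hv & Hxiv & _).
  exact (orthonormal3_cross _ _ Hxi Hv Hxiv).
Qed.

Lemma sabban_coords_derive w s : inI a b s ->
  is_derive (frame_coord v w) s (N s * tc w s) /\
  is_derive (tc w) s (N s * (sigma s * nc w s - frame_coord v w s)) /\
  is_derive (nc w) s (- N s * sigma s * tc w s).
Proof.
  intros Hs. pose proof (TK_sq_pos s Hs) as Hpos.
  destruct HM as (_ & _ & _ & _ & HKs & HTs & Hloc).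
  destruct (Hloc s Hs) as (_ & _ & _ & _ & Dxi & Dmu & Dv).
  pose proof (vis_derive_dot _ _ _ w Dxi) as Dx; rewrite dot_vadd_vscal_l in Dx.
  pose proof (vis_derive_dot _ _ _ w Dmu) as Dy; rewrite dot_vadd_vscal_l in Dy.
  pose proof (vis_derive_dot _ _ _ w Dv) as Dz; rewrite dot_vadd_vscal_l in Dz.
  split.
  - unfold N, tc. rewrite sabban_speed_mul_tangent_coord by exact Hpos.
    replace (- (K s * frame_coord xi w s + T s * frame_coord mu w s))
      with (- K s * dot (xi s) w + - T s * dot (cross (v s) (xi s)) w)
      by (unfold frame_coord, mu, darboux_mu; ring).
    exact Dz.
  - apply (is_derive_sabban_coords G _ _ _ _ (frame_coord v w)); auto.
    + exact (HTs 1%nat s Hs).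
    + exact (HKs 1%nat s Hs).
Qed.

Lemma sabban_coords_sum_sq w s : inI a b s ->
  tc w s ^ 2 + nc w s ^ 2 + frame_coord v w s ^ 2 = dot w w.
Proof.
  intros Hs. destruct HM as (_ & _ & _ & _ & _ & _ & Hloc).
  destruct (Hloc s Hs) as (_ & Hxi & Hv & Hxiv & _).
  unfold tc, nc. rewrite sabban_coords_sq by exact (TK_sq_pos s Hs).
  exact (dot_parseval_cross _ _ w Hxi Hv Hxiv).
Qed.

Lemma v_helix_cos_eq_mul_sigma_v d omega :
  Rbar_lt a b -> v_helix_with a b v d omega ->
  exists e, e ^ 2 = sin omega ^ 2 /\ forall s, inI a b s -> cos omega = e * sigma s.
Proof.
  intros Hab [Hdd Hcos]. destruct (inI_inhabited a b Hab) as [s0 Hs0].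
  assert (Htc : forall s, inI a b s -> tc d s = 0).
  { intros s Hs. destruct (sabban_coords_derive d s Hs) as [Dz _].
    pose proof (is_derive_unique _ _ _ Dz) as Ez.
    rewrite (is_derive_unique _ _ _ (is_derive_const_on a b (frame_coord v d) _ s Hcos Hs)) in Ez.
    pose proof (sabban_speed_pos K T s (TK_sq_pos s Hs)) as HN. fold N in HN. nra. }
  assert (Hnc : forall s, inI a b s -> nc d s = nc d s0).
  { intros s Hs. apply (const_on_of_is_derive_0 a b); auto.
    intros t Ht. destruct (sabban_coords_derive d t Ht) as (_ & _ & Dnc).
    rewrite Htc, Rmult_0_r in Dnc by exact Ht. exact Dnc. }
  exists (nc d s0). split.
  - pose proof (sabban_coords_sum_sq d s0 Hs0) as Hsq.
    unfold frame_coord in Hsq. rewrite Htc, Hcos, Hdd in Hsq by exact Hs0.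
    pose proof (sin2_cos2 omega) as Hsc. unfold Rsqr in Hsc. nra.
  - intros s Hs. destruct (sabban_coords_derive d s Hs) as (_ & Dtc & _).
    pose proof (is_derive_unique _ _ _ Dtc) as Etc.
    rewrite (is_derive_unique _ _ _ (is_derive_const_on a b (tc d) _ s Htc Hs)) in Etc.
    pose proof (sabban_speed_pos K T s (TK_sq_pos s Hs)) as HN. fold N in HN.
    unfold frame_coord in Etc. rewrite Hcos, Hnc in Etc by exact Hs.
    nra.
Qed.

Lemma sigma_v_const_v_helix c :
  Rbar_lt a b -> (forall s, inI a b s -> sigma s = c) -> v_helix a b v.
Proof.
  intros Hab Hc. destruct (inI_inhabited a b Hab) as [s0 Hs0].
  set (k := / sqrt (1 + c²)).
  set (A := fun t => vcomb3 (k * (T t / N t)) (k * (- K t / N t)) (k * c) (xi t) (mu t) (v t)).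
  assert (HA : forall w t, dot (A t) w = k * (nc w t + c * frame_coord v w t)).
  { intros w t. unfold A, nc, N, sabban_normal_coord, frame_coord.
    rewrite dot_vcomb3_l. unfold Rdiv. ring. }
  assert (Aconst : forall t, inI a b t -> A t = A s0).
  { intros t Ht. apply vec3_ext_dot. intros w. rewrite !HA.
    apply (const_on_of_is_derive_0 a b (fun t => k * (nc w t + c * frame_coord v w t))); auto.
    intros s Hs. destruct (sabban_coords_derive w s Hs) as (Dz & _ & Dnc).
    replace 0 with (k * (- N s * sigma s * tc w s + c * (N s * tc w s)))
      by (rewrite Hc by exact Hs; ring).
    apply is_derive_scal, (is_derive_plus (nc w)); [exact Dnc|].
    apply is_derive_scal. exact Dz. }
  exists (A s0), (PI / 2 - atan c).
  destruct (dot_vcomb3_orthonormal3 (k * (T s0 / N s0)) (k * (- K s0 / N s0)) (k * c) _ _ _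
    (darboux_frame_orthonormal s0 Hs0)) as [HAA _].
  split.
  - fold (A s0) in HAA. rewrite HAA.
    pose proof (sabban_speed_pos K T s0 (TK_sq_pos s0 Hs0)) as HN.
    pose proof (sabban_speed_sq K T s0 (TK_sq_pos s0 Hs0)) as HN2. fold N in HN, HN2.
    assert (Hk : 0 < 1 + c²) by (pose proof (Rle_0_sqr c); lra).
    transitivity (k ^ 2 * ((T s0 ^ 2 + K s0 ^ 2) / N s0 ^ 2 + c²)); [unfold Rsqr; field; lra|].
    unfold k. rewrite <- HN2, pow_inv, pow2_sqrt by lra. field. lra.
  - intros t Ht. rewrite <- (Aconst t Ht).
    destruct (dot_vcomb3_orthonormal3 (k * (T t / N t)) (k * (- K t / N t)) (k * c) _ _ _
      (darboux_frame_orthonormal t Ht)) as [_ HvA].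
    fold (A t) in HvA. rewrite HvA, cos_shift, sin_atan. unfold k, Rdiv. ring.
Qed.

Lemma v_helix_cot_sigma_v d omega :
  Rbar_lt a b -> v_helix_with a b v d omega ->
  sin omega <> 0 /\
  exists eps, (eps = 1 \/ eps = -1) /\
    forall s, inI a b s -> cos omega / sin omega = eps * sigma s.
Proof.
  intros Hab Hh. destruct (inI_inhabited a b Hab) as [s0 Hs0].
  destruct (v_helix_cos_eq_mul_sigma_v d omega Hab Hh) as (e & He & Hcos).
  pose proof (sin2_cos2 omega) as Hsc. unfold Rsqr in Hsc.
  assert (Hsin : sin omega <> 0).
  { intros Hsin0. rewrite Hsin0 in He, Hsc.
    assert (e = 0) as -> by nra.
    specialize (Hcos s0 Hs0). rewrite Rmult_0_l in Hcos. rewrite Hcos in Hsc. lra. }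
  split; [exact Hsin|].
  exists (e / sin omega). split.
  - assert (Heps : (e / sin omega - 1) * (e / sin omega + 1) = 0).
    { transitivity ((e ^ 2 - sin omega ^ 2) / sin omega ^ 2); [field; exact Hsin|].
      rewrite He. field. exact Hsin. }
    apply Rmult_integral in Heps. lra.
  - intros s Hs. rewrite (Hcos s Hs). field. exact Hsin.
Qed.

End DarbouxFrame.

Theorem theorem24 (a b : Rbar) (r xi v : R -> vec3) (G K T : R -> R) :
  Rbar_lt a b ->
  Myller_configuration a b r xi v G K T ->
  (forall s, inI a b s -> (T s, K s) <> (0, 0)) ->
  (v_helix a b v <-> exists c, forall s, inI a b s -> sigma_v G K T s = c) /\
  (forall (d : vec3) (omega : R), v_helix_with a b v d omega ->
     sin omega <> 0 /\
     exists eps : R, (eps = 1 \/ eps = -1) /\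
       forall s, inI a b s -> cos omega / sin omega = eps * sigma_v G K T s).
Proof.
  intros Hab HM HTK.
  split; [split|].
  - intros (d & omega & Hh).
    destruct (v_helix_cot_sigma_v a b r xi v G K T HM HTK d omega Hab Hh)
      as (_ & eps & Heps & Hcot).
    exists (eps * (cos omega / sin omega)). intros s Hs.
    rewrite (Hcot s Hs). destruct Heps as [-> | ->]; ring.
  - intros (c & Hc). exact (sigma_v_const_v_helix a b r xi v G K T HM HTK c Hab Hc).
  - intros d omega Hh. exact (v_helix_cot_sigma_v a b r xi v G K T HM HTK d omega Hab Hh).
Qed.
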